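(* Let $U\subseteq\mathbb{R}^d$ be an open convex set, let $f$ be a convex function finite on $U$ with $f_U:=\inf_{x'\in U}f(x')$ finite, let $g(\cdot)$ be a deterministic subgradient oracle ($g(x)\in\partial f(x)$ for each $x$), and let $L_0\ge0$, $L_1>0$. Then $$\|g(x)\|^2\le L_0^2+L_1(f(x)-f_U)\qquad\text{for all }x\in U$$ holds if and only if, for each $x\in U$, $$f(y)\le f(x)+\frac{L_1}{4}\|y-x\|^2+\|y-x\|\sqrt{L_1(f(x)-f_U)+L_0^2}\qquad\text{for all }y\in U.$$
   Context: $\partial f(x)=\{g: f(y)\ge f(x)+g^T(y-x)\ \forall y\}$; the oracle returns an arbitrary element of it. *)

From HB Require Import structures.
From mathcomp Require Import all_boot all_order all_algebra.
From mathcomp Require Import all_classical all_reals.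
Set Implicit Arguments. Unset Strict Implicit. Unset Printing Implicit Defensive.
Import Order.TTheory GRing.Theory Num.Theory.
Local Open Scope ring_scope.
Local Open Scope classical_set_scope.

Definition dotv (R : realType) (d : nat) (u v : 'rV[R]_d) : R :=
  \sum_(i < d) u ord0 i * v ord0 i.

Definition enorm (R : realType) (d : nat) (v : 'rV[R]_d) : R :=
  Num.sqrt (dotv v v).

Definition eopen (R : realType) (d : nat) (U : set 'rV[R]_d) : Prop :=
  forall x, U x -> exists2 e : R, 0 < e &
    forall y, enorm (y - x) < e -> U y.

Definition convex_set (R : realType) (d : nat) (U : set 'rV[R]_d) : Prop :=
  forall x y (t : R), U x -> U y -> 0 <= t -> t <= 1 ->
    U ((1 - t) *: x + t *: y).

(* f is convex (and finite, being real-valued) on U *)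
Definition convex_on (R : realType) (d : nat) (U : set 'rV[R]_d)
    (f : 'rV[R]_d -> R) : Prop :=
  forall x y (t : R), U x -> U y -> 0 <= t -> t <= 1 ->
    f ((1 - t) *: x + t *: y) <= (1 - t) * f x + t * f y.

Definition subdiff (R : realType) (d : nat) (U : set 'rV[R]_d)
    (f : 'rV[R]_d -> R) (x : 'rV[R]_d) : set 'rV[R]_d :=
  [set g | forall y, U y -> f x + dotv g (y - x) <= f y].

Definition finf (R : realType) (d : nat) (U : set 'rV[R]_d)
    (f : 'rV[R]_d -> R) : R := inf (f @` U).

(* With c z := L1 (f z - f_U) + L0^2, both sides compare |g x| with sqrt (c x).
   (<-) For y = x + t g x the subgradient inequality gives t |g x|^2 <= f y - f x,
   which the model bounds by L1/4 t^2 |g x|^2 + t |g x| sqrt (c x); divide by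
   t |g x| and let t -> 0.
   (->) For z, w on the segment [x, y], f w - f z <= |g w| |w - z|
   <= sqrt (c w) |w - z|, so c grows at rate at most L1 |y - x| sqrt c and
   sqrt c at rate at most L1 |y - x| / 2 (made rigorous on finer and finer
   grids). Squaring sqrt (c y) <= sqrt (c x) + L1 |y - x| / 2 is the model. *)

From HB Require Import structures.
From mathcomp Require Import all_boot all_order all_algebra.
From mathcomp Require Import all_classical all_reals.
From mathcomp Require Import ring lra.
Import Order.TTheory GRing.Theory Num.Theory.
Local Open Scope ring_scope.
Local Open Scope classical_set_scope.
Set Implicit Arguments. Unset Strict Implicit.

Section SqrtGrowth.
Variable R : realType.
Implicit Types (a b D K : R).

Lemma ler_sqrtr a b : 0 <= a -> 0 <= b -> (a <= Num.sqrt b) = (a ^+ 2 <= b).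
Proof. by move=> a0 b0; rewrite -[in RHS]ler_sqrt // sqrtr_sqr ger0_norm. Qed.

Lemma ler_sqrtl a b : 0 <= b -> (Num.sqrt a <= b) = (a <= b ^+ 2).
Proof. by move=> b0; rewrite -[in LHS](ger0_norm b0) -sqrtr_sqr ler_sqrt ?sqr_ge0. Qed.

Lemma sqrtrD_le a b : 0 <= a -> 0 <= b ->
  Num.sqrt (a + b) <= Num.sqrt a + Num.sqrt b.
Proof.
move=> a0 b0; rewrite ler_sqrtl ?addr_ge0 ?sqrtr_ge0 //.
rewrite sqrrD !sqr_sqrtr //.
by have := mulr_ge0 (sqrtr_ge0 a) (sqrtr_ge0 b); lra.
Qed.

Lemma sqr_increment_step (s s' a D : R) : 0 < D -> D <= s -> 0 <= s' ->
  s' ^+ 2 <= s ^+ 2 + 2 * a * s' -> s' <= s + a + a ^+ 2 / (2 * D).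
Proof.
move=> D0 Ds s'0 h.
have a2E : 2 * D * (a ^+ 2 / (2 * D)) = a ^+ 2 by field; lra.
have : 0 <= a ^+ 2 / (2 * D) by rewrite divr_ge0 ?sqr_ge0 //; lra.
nra.
Qed.

Lemma sqr_increment_telescope (s : nat -> R) (a D : R) (n : nat) : 0 < D ->
  (forall k, (k <= n)%N -> D <= s k) ->
  (forall k, (k < n)%N -> s k.+1 ^+ 2 <= s k ^+ 2 + 2 * a * s k.+1) ->
  s n <= s 0%N + n%:R * (a + a ^+ 2 / (2 * D)).
Proof.
move=> D0 Ds s_incr.
suff: forall k, (k <= n)%N -> s k <= s 0%N + k%:R * (a + a ^+ 2 / (2 * D)).
  exact.
elim=> [|k IH] kn; first by rewrite mul0r addr0.
have s_ge0 : 0 <= s k.+1 by apply: le_trans (ltW D0) (Ds _ kn).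
have := sqr_increment_step D0 (Ds k (ltnW kn)) s_ge0 (s_incr k kn).
by have := IH (ltnW kn); rewrite mulrSr; lra.
Qed.

(* Discrete form of (sqrt q)' <= K / 2: on a grid of n steps each step of sqrt q
   costs K / (2 n) plus a second-order error that sums to K^2 / (8 D n). *)
Lemma sqrt_growth_le_pos (q : R -> R) (K D : R) : 0 < D ->
  (forall t, 0 <= t <= 1 -> D ^+ 2 <= q t) ->
  (forall s t, 0 <= s -> s <= t -> t <= 1 ->
     q t - q s <= K * (t - s) * Num.sqrt (q t)) ->
  Num.sqrt (q 1) <= Num.sqrt (q 0) + K / 2.
Proof.
move=> D0 qD q_incr; apply/ler_addgt0Pr => eps eps0.
have den_gt0 : 0 < 8 * D * eps by rewrite !mulr_gt0.
pose n := (Num.Def.archi_bound (K ^+ 2 / (8 * D * eps))).+1.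
have n_gt0 : 0 < n%:R :> R by rewrite ltr0n.
have Kn : K ^+ 2 / (8 * D * n%:R) <= eps.
  have : K ^+ 2 / (8 * D * eps) < n%:R.
    rewrite (lt_le_trans (archi_boundP _)) ?ler_nat //.
    by rewrite divr_ge0 ?sqr_ge0 ?ltW.
  by rewrite ler_pdivrMr ?mulr_gt0 // ltr_pdivrMr //; lra.
pose t (k : nat) : R := k%:R / n%:R.
have t_in k : (k <= n)%N -> 0 <= t k <= 1.
  by move=> kn; rewrite /t divr_ge0 ?ler0n //= ler_pdivrMr // mul1r ler_nat.
have q_ge0 k : (k <= n)%N -> 0 <= q (t k).
  by move=> kn; apply: le_trans (qD _ (t_in k kn)); rewrite sqr_ge0.
suff : Num.sqrt (q 1) <= Num.sqrt (q 0) + (K / 2 + K ^+ 2 / (8 * D * n%:R)).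
  by lra.
have -> : K / 2 + K ^+ 2 / (8 * D * n%:R) =
          n%:R * (K / (2 * n%:R) + (K / (2 * n%:R)) ^+ 2 / (2 * D)).
  by field; rewrite !lt0r_neq0.
have t0 : t 0%N = 0 by rewrite /t mul0r.
have t1 : t n = 1 by rewrite /t divff ?lt0r_neq0.
have := @sqr_increment_telescope (fun k => Num.sqrt (q (t k))) _ _ n D0.
rewrite /= t0 t1; apply=> k kn.
  by rewrite ler_sqrtr ?(ltW D0) ?q_ge0 ?qD ?t_in.
have kn' := ltnW kn.
rewrite !sqr_sqrtr ?q_ge0 //.
have [/andP[tk0 _] /andP[_ tk1]] := (t_in k kn', t_in k.+1 kn).
have := q_incr (t k) (t k.+1) tk0.
rewrite /t -mulrBl -natrB // subSnn ler_pM2r ?invr_gt0 ?ler_nat //.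
by move=> /(_ (leqnSn _) tk1); lra.
Qed.

(* Shifting q by e^2 supplies the positive lower bound required above. *)
Lemma sqrt_growth_le (q : R -> R) (K : R) : 0 <= K ->
  (forall t, 0 <= t <= 1 -> 0 <= q t) ->
  (forall s t, 0 <= s -> s <= t -> t <= 1 ->
     q t - q s <= K * (t - s) * Num.sqrt (q t)) ->
  Num.sqrt (q 1) <= Num.sqrt (q 0) + K / 2.
Proof.
move=> K0 q_ge0 q_incr; apply/ler_addgt0Pr => e e0.
have q0_ge0 : 0 <= q 0 by rewrite q_ge0 ?lexx ?ler01.
have q1_ge0 : 0 <= q 1 by rewrite q_ge0 ?lexx ?ler01.
have e2_ge0 := sqr_ge0 e.
have bound : Num.sqrt (q 1 + e ^+ 2) <= Num.sqrt (q 0 + e ^+ 2) + K / 2.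
  apply: (@sqrt_growth_le_pos (fun t => q t + e ^+ 2) K e e0) => /=.
    by move=> t /q_ge0; lra.
  move=> s t s0 st t1; rewrite opprD addrACA subrr addr0.
  apply: le_trans (q_incr s t s0 st t1) _.
  rewrite ler_wpM2l ?mulr_ge0 ?subr_ge0 // ler_sqrt ?lerDl ?addr_ge0 //.
  by rewrite q_ge0 // (le_trans s0 st).
have q1_le : Num.sqrt (q 1) <= Num.sqrt (q 1 + e ^+ 2).
  by rewrite ler_sqrt ?addr_ge0 // lerDl.
have := sqrtrD_le q0_ge0 e2_ge0; rewrite sqrtr_sqr (ger0_norm (ltW e0)).
lra.
Qed.
End SqrtGrowth.

Section EuclideanRow.
Variables (R : realType) (d : nat).
Implicit Types (u v w : 'rV[R]_d) (a : R).

Lemma dotvC u v : dotv u v = dotv v u.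
Proof. by apply: eq_bigr => i _; rewrite mulrC. Qed.

Lemma dotvDl u v w : dotv (u + v) w = dotv u w + dotv v w.
Proof. by rewrite /dotv -big_split; apply: eq_bigr => i _; rewrite !mxE mulrDl. Qed.

Lemma dotvZl a u v : dotv (a *: u) v = a * dotv u v.
Proof. by rewrite /dotv mulr_sumr; apply: eq_bigr => i _; rewrite !mxE mulrA. Qed.

Lemma dotvNl u v : dotv (- u) v = - dotv u v.
Proof. by rewrite -scaleN1r dotvZl mulN1r. Qed.

Lemma dotvDr u v w : dotv u (v + w) = dotv u v + dotv u w.
Proof. by rewrite dotvC dotvDl !(dotvC u). Qed.

Lemma dotvZr a u v : dotv u (a *: v) = a * dotv u v.
Proof. by rewrite dotvC dotvZl dotvC. Qed.

Lemma dotvNr u v : dotv u (- v) = - dotv u v.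
Proof. by rewrite dotvC dotvNl dotvC. Qed.

Lemma dotv0l v : dotv 0 v = 0.
Proof. by rewrite -(scale0r 0) dotvZl mul0r. Qed.

Lemma dotv_ge0 u : 0 <= dotv u u.
Proof. by apply: sumr_ge0 => i _; rewrite -expr2 sqr_ge0. Qed.

Lemma dotv_eq0 u : (dotv u u == 0) = (u == 0).
Proof.
apply/idP/eqP => [/eqP u0|->]; last by rewrite dotv0l.
apply/rowP => i; apply/eqP; rewrite mxE -sqrf_eq0 expr2.
by rewrite (psumr_eq0P _ u0) // => j _; rewrite -expr2 sqr_ge0.
Qed.

Lemma enorm_ge0 u : 0 <= enorm u.
Proof. exact: sqrtr_ge0. Qed.

Lemma enorm_gt0 u : (0 < enorm u) = (u != 0).
Proof. by rewrite sqrtr_gt0 lt_def dotv_ge0 dotv_eq0 andbT. Qed.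

Lemma enorm_sqr u : enorm u ^+ 2 = dotv u u.
Proof. by rewrite sqr_sqrtr ?dotv_ge0. Qed.

Lemma enormZ a u : enorm (a *: u) = `|a| * enorm u.
Proof. by rewrite /enorm dotvZl dotvZr mulrA -expr2 sqrtrM ?sqr_ge0 ?sqrtr_sqr. Qed.

Lemma dotv_le_enorm u v : dotv u v <= enorm u * enorm v.
Proof.
have [->|u0] := eqVneq u 0; first by rewrite dotv0l mulr_ge0 ?enorm_ge0.
have [->|v0] := eqVneq v 0; first by rewrite dotvC dotv0l mulr_ge0 ?enorm_ge0.
have ab_gt0 : 0 < enorm u * enorm v by rewrite mulr_gt0 ?enorm_gt0.
(* |b u - a v|^2 = 2ab (ab - <u, v>) with a = |u|, b = |v| *)
have := dotv_ge0 (enorm v *: u - enorm u *: v).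
rewrite !(dotvDl, dotvDr, dotvNl, dotvNr, dotvZl, dotvZr) (dotvC v u).
rewrite -!enorm_sqr; nra.
Qed.
End EuclideanRow.

Section SubgradientBound.
Variables (R : realType) (d : nat) (U : set 'rV[R]_d).
Variables (f : 'rV[R]_d -> R) (g : 'rV[R]_d -> 'rV[R]_d).
Hypothesis g_subgrad : forall x, U x -> subdiff U f x (g x).

Lemma subgrad_increment_le z w : U z -> U w ->
  f w - f z <= enorm (g w) * enorm (w - z).
Proof.
move=> Uz Uw; have := g_subgrad Uw Uz.
rewrite -[z - w]opprB dotvNr; have := dotv_le_enorm (g w) (w - z); lra.
Qed.

Variables (fU L0 L1 : R).
Hypotheses (L1_gt0 : 0 < L1) (fU_le : forall z, U z -> fU <= f z).

Let L1_ge0 : 0 <= L1 := ltW L1_gt0.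

Let c z := L1 * (f z - fU) + L0 ^+ 2.

Let c_ge0 z : U z -> 0 <= c z.
Proof. by move=> Uz; rewrite addr_ge0 ?sqr_ge0 ?mulr_ge0 ?subr_ge0 ?fU_le ?L1_ge0. Qed.

Let subgrad_norm_boundE z : U z ->
  (enorm (g z) ^+ 2 <= L0 ^+ 2 + L1 * (f z - fU)) =
  (enorm (g z) <= Num.sqrt (c z)).
Proof. by move=> Uz; rewrite ler_sqrtr ?enorm_ge0 ?c_ge0 // addrC. Qed.

Lemma subgrad_norm_bound_of_upper_model x : eopen U -> U x ->
  (forall y, U y -> f y <= f x + L1 / 4 * enorm (y - x) ^+ 2
                             + enorm (y - x) * Num.sqrt (c x)) ->
  enorm (g x) ^+ 2 <= L0 ^+ 2 + L1 * (f x - fU).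
Proof.
move=> U_open Ux model; rewrite subgrad_norm_boundE //.
set N := enorm (g x); set S := Num.sqrt (c x).
have [e e_gt0 ball_U] := U_open x Ux.
have := enorm_ge0 (g x); rewrite -/N le_eqVlt => /predU1P[<-|N_gt0].
  exact: sqrtr_ge0.
have step t : 0 < t -> t * N < e -> N <= S + L1 / 4 * N * t.
  move=> t_gt0 tN_lt; set y := x + t *: g x.
  have yx : y - x = t *: g x by rewrite addrC addKr.
  have ny : enorm (y - x) = t * N by rewrite yx enormZ gtr0_norm.
  have Uy : U y by apply: ball_U; rewrite ny.
  have := g_subgrad Ux Uy; rewrite yx dotvZr -enorm_sqr -/N.
  have := model y Uy; rewrite ny -/S => up low.
  by rewrite -(ler_pM2l (mulr_gt0 t_gt0 N_gt0)); nra.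
apply/ler_addgt0Pr => eps eps_gt0.
pose m := Num.min e (4 * eps / L1).
have m_gt0 : 0 < m by rewrite lt_min e_gt0 divr_gt0 ?mulr_gt0.
have m_le_e : m <= e by rewrite ge_min lexx.
have L1m_le : m * L1 <= 4 * eps by rewrite -ler_pdivlMr // ge_min lexx orbT.
have := step (m / (2 * N)); rewrite divr_gt0 ?mulr_gt0 //.
have -> : m / (2 * N) * N = m / 2 by field; rewrite lt0r_neq0.
have -> : L1 / 4 * N * (m / (2 * N)) = m * L1 / 8 by field; rewrite lt0r_neq0.
by move=> /(_ isT); lra.
Qed.

Lemma sqrt_growth_on_segment x y : convex_set U ->
  (forall z, U z -> enorm (g z) <= Num.sqrt (c z)) -> U x -> U y ->
  Num.sqrt (c y) <= Num.sqrt (c x) + L1 * enorm (y - x) / 2.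
Proof.
move=> U_convex g_le Ux Uy; pose p t := x + t *: (y - x).
have Up t : 0 <= t <= 1 -> U (p t).
  case/andP=> t_ge0 t_le1; have := U_convex x y t Ux Uy t_ge0 t_le1.
  by rewrite /p scalerBr scalerBl scale1r addrAC addrA.
have p0 : p 0 = x by rewrite /p scale0r addr0.
have p1 : p 1 = y by rewrite /p scale1r addrC subrK.
have := @sqrt_growth_le _ (fun t => c (p t)) (L1 * enorm (y - x)).
rewrite p0 p1; apply; first by rewrite mulr_ge0 ?enorm_ge0 ?L1_ge0.
  by move=> t /Up /c_ge0.
move=> s t s_ge0 st t_le1.
have Us : U (p s) by apply: Up; rewrite s_ge0 (le_trans st t_le1).
have Ut : U (p t) by apply: Up; rewrite t_le1 (le_trans s_ge0 st).
have pts : p t - p s = (t - s) *: (y - x).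
  by rewrite /p opprD addrACA subrr add0r -scalerBl.
have ts_ge0 : 0 <= t - s by rewrite subr_ge0.
have incr := subgrad_increment_le Us Ut.
rewrite pts enormZ ger0_norm // in incr.
have := ler_wpM2r (mulr_ge0 ts_ge0 (enorm_ge0 (y - x))) (g_le _ Ut).
move=> /(le_trans incr) /(ler_wpM2l L1_ge0).
by rewrite /c; lra.
Qed.

Lemma upper_model_of_subgrad_norm_bound x y : convex_set U ->
  (forall z, U z -> enorm (g z) ^+ 2 <= L0 ^+ 2 + L1 * (f z - fU)) -> U x -> U y ->
  f y <= f x + L1 / 4 * enorm (y - x) ^+ 2 + enorm (y - x) * Num.sqrt (c x).
Proof.
move=> U_convex g_bound Ux Uy.
have g_le z : U z -> enorm (g z) <= Num.sqrt (c z).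
  by move=> Uz; rewrite -subgrad_norm_boundE ?g_bound.
have := sqrt_growth_on_segment U_convex g_le Ux Uy.
rewrite ler_sqrtl ?addr_ge0 ?sqrtr_ge0 ?divr_ge0 ?mulr_ge0 ?enorm_ge0 ?L1_ge0 //.
rewrite sqrrD sqr_sqrtr ?c_ge0 // /c.
have := enorm_ge0 (y - x); set r := enorm (y - x); set S := Num.sqrt _.
move=> r_ge0 h; rewrite -(ler_pM2l L1_gt0); nra.
Qed.
End SubgradientBound.

Theorem proposition2p6 (R : realType) (d : nat) (U : set 'rV[R]_d)
    (f : 'rV[R]_d -> R) (g : 'rV[R]_d -> 'rV[R]_d) (L0 L1 : R) :
  eopen U -> convex_set U -> convex_on U f ->
  has_inf (f @` U) ->
  (forall x, U x -> subdiff U f x (g x)) ->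
  0 <= L0 -> 0 < L1 ->
  (forall x, U x -> enorm (g x) ^+ 2 <= L0 ^+ 2 + L1 * (f x - finf U f)) <->
  (forall x, U x -> forall y, U y ->
     f y <= f x + L1 / 4 * enorm (y - x) ^+ 2
            + enorm (y - x) * Num.sqrt (L1 * (f x - finf U f) + L0 ^+ 2)).
Proof.
move=> U_open U_convex _ f_inf g_subgrad _ L1_gt0.
have fU_le z : U z -> finf U f <= f z.
  by move=> Uz; apply: (ge_inf f_inf.2); exists z.
split=> [g_bound x Ux y Uy | model x Ux].
  exact: (upper_model_of_subgrad_norm_bound g_subgrad L1_gt0 fU_le).
apply: (subgrad_norm_bound_of_upper_model g_subgrad L1_gt0 fU_le U_open Ux).
exact: model.
Qed.
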